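(* Let $H$ be a locally compact abelian group, $X$ a compact metric space, $\sigma=(\sigma_1,\dots,\sigma_k)$ a $k$-tuple of pairwise commuting surjective local homeomorphisms of $X$, and $\varphi=(\varphi_1,\dots,\varphi_k)$ a $k$-tuple in $C(X,H)$. The following are equivalent: (1) $\varphi_i+\varphi_j\circ\sigma_i=\varphi_j+\varphi_i\circ\sigma_j$ for all $i,j\in\{1,\dots,k\}$; (2) there exists a unique continuous $H$-valued $1$-cocycle $c$ on $\mathcal{G}(X,\sigma)$ with $c(x,\mathbf{e}_i,\sigma_i(x))=\varphi_i(x)$ for all $i\in\{1,\dots,k\}$ and $x\in X$. Moreover, every continuous $H$-valued $1$-cocycle on $\mathcal{G}(X,\sigma)$ arises in this way from some $k$-tuple $\varphi$ satisfying (1), and a continuous $1$-cocycle $c$ on $\mathcal{G}(X,\sigma)$ is a coboundary if and only if there exists $\psi\in C(X,H)$ with $c(x,\mathbf{e}_i,\sigma_i(x))=\psi(x)-\psi(\sigma_i(x))$ for all $i\in\{1,\dots,k\}$ and $x\in X$.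
   Context: For $n=(n_1,\dots,n_k)\in\mathbb{N}^k$ write $\sigma^n=\sigma_1^{n_1}\circ\cdots\circ\sigma_k^{n_k}$, and $\mathbf{e}_i$ for the canonical generators of $\mathbb{N}^k$. The groupoid $\mathcal{G}(X,\sigma)=\{(x,p-q,y)\in X\times\mathbb{Z}^k\times X : p,q\in\mathbb{N}^k,\ \sigma^p(x)=\sigma^q(y)\}$ has unit space $X$ (via $x\mapsto(x,0,x)$), $r(x,n,y)=x$, $s(x,n,y)=y$, $(x,m,y)^{-1}=(y,-m,x)$, $(x,m,y)(y,n,z)=(x,m+n,z)$, and topology with basis $U\times\{p-q\}\times V$ for $U,V\subseteq X$ open with $\sigma^p(U)=\sigma^q(V)$; it is an étale locally compact Hausdorff groupoid. A continuous $H$-valued $1$-cocycle on a topological groupoid $\mathcal{G}$ is a continuous map $c:\mathcal{G}\to H$ with $c(\gamma\gamma')=c(\gamma)+c(\gamma')$ for composable pairs; it is a coboundary if $c(\gamma)=f(r(\gamma))-f(s(\gamma))$ for some continuous $f$ on the unit space. *)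

From HB Require Import structures.
From mathcomp Require Import all_boot all_order all_algebra.
From mathcomp Require Import all_classical all_reals all_analysis.
Set Implicit Arguments. Unset Strict Implicit. Unset Printing Implicit Defensive.
Import Order.TTheory GRing.Theory Num.Theory.
Local Open Scope classical_set_scope.
Local Open Scope ring_scope.

Definition Zk (k : nat) := {ffun 'I_k -> int}.

Definition evec (k : nat) (i : 'I_k) : Zk k := [ffun j => ((j == i) : nat)%:Z].

Definition nat_diff (k : nat) (p q : 'I_k -> nat) : Zk k :=
  [ffun j => (p j)%:Z - (q j)%:Z].

Definition sigma_pow (X : Type) (k : nat) (sigma : 'I_k -> X -> X)
  (n : 'I_k -> nat) : X -> X :=
  foldr (fun j f => iter (n j) (sigma j) \o f) id (enum 'I_k).

(* local homeomorphism: continuous, and every point has an open neighbourhood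
   U on which f is injective and open (hence a homeomorphism onto the open
   set f(U)) *)
Definition local_homeo (X : topologicalType) (f : X -> X) : Prop :=
  continuous f /\
  forall x, exists U : set X, [/\ open U, U x, set_inj U f &
     forall W, open W -> W `<=` U -> open (f @` W)].

Definition inG (X : Type) (k : nat) (sigma : 'I_k -> X -> X)
  (g : X * Zk k * X) : Prop :=
  exists p q : 'I_k -> nat,
    g.1.2 = nat_diff p q /\ sigma_pow sigma p g.1.1 = sigma_pow sigma q g.2.

Definition DRgroupoid (X : Type) (k : nat) (sigma : 'I_k -> X -> X) :=
  {g : X * Zk k * X | inG sigma g}.

Definition grng X k sigma (g : @DRgroupoid X k sigma) : X := (proj1_sig g).1.1.
Definition gsrc X k sigma (g : @DRgroupoid X k sigma) : X := (proj1_sig g).2.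
Definition gdeg X k sigma (g : @DRgroupoid X k sigma) : Zk k := (proj1_sig g).1.2.

Definition Zbasic X k (sigma : 'I_k -> X -> X) (U V : set X)
  (p q : 'I_k -> nat) : set (DRgroupoid sigma) :=
  [set g | U (grng g) /\ V (gsrc g) /\ gdeg g = nat_diff p q /\
           sigma_pow sigma p (grng g) = sigma_pow sigma q (gsrc g)].

(* continuity of a map on G(X,sigma) for the topology with basis the sets
   Z(U,p,q,V), U V open with sigma^p(U) = sigma^q(V) *)
Arguments Zbasic {X k} sigma U V p q _.

Definition groupoid_continuous (X T : topologicalType) k
  (sigma : 'I_k -> X -> X) (c : DRgroupoid sigma -> T) : Prop :=
  forall (g : DRgroupoid sigma) (W : set T), nbhs (c g) W ->
    exists (U V : set X) (p q : 'I_k -> nat),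
      [/\ open U, open V, (sigma_pow sigma p) @` U = (sigma_pow sigma q) @` V,
          Zbasic sigma U V p q g & Zbasic sigma U V p q `<=` c @^-1` W].

(* algebraic 1-cocycle: c(gamma gamma') = c(gamma) + c(gamma') for composable
   gamma = (x,m,y), gamma' = (y,n,z), with gamma gamma' = (x, m+n, z) *)
Definition is_cocycle X k (sigma : 'I_k -> X -> X) (H : zmodType)
  (c : DRgroupoid sigma -> H) : Prop :=
  forall (x y z : X) (m n : Zk k) (h1 : inG sigma (x, m, y))
    (h2 : inG sigma (y, n, z)) (h3 : inG sigma (x, m + n, z)),
    c (exist _ (x, m + n, z) h3) = c (exist _ _ h1) + c (exist _ _ h2).

Definition is_cont_cocycle (X : topologicalType) k (sigma : 'I_k -> X -> X)
  (H : topologicalZmodType) (c : DRgroupoid sigma -> H) : Prop :=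
  is_cocycle c /\ groupoid_continuous c.

Definition is_coboundary (X : topologicalType) k (sigma : 'I_k -> X -> X)
  (H : topologicalZmodType) (c : DRgroupoid sigma -> H) : Prop :=
  exists f : X -> H, continuous f /\
    forall g : DRgroupoid sigma, c g = f (grng g) - f (gsrc g).

(* sigma^{e_i} = sigma_i *)
Lemma sigma_pow_foldr X k (sigma : 'I_k -> X -> X) (i : 'I_k) (s : seq 'I_k) x :
  uniq s ->
  foldr (fun j f => iter ((j == i) : nat) (sigma j) \o f) id s x =
  if i \in s then sigma i x else x.
Proof.
elim: s => [|j s IH] //= /andP[js us].
rewrite in_cons IH //.
case: (eqVneq j i) => [eji|ji] /=.
  by subst j; rewrite (negbTE js).
by [].
Qed.

Lemma inG_gen X k (sigma : 'I_k -> X -> X) (i : 'I_k) (x : X) :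
  inG sigma (x, evec i, sigma i x).
Proof.
exists (fun j => ((j == i) : nat)), (fun _ => 0%N); split.
  by apply/ffunP => j; rewrite /evec /nat_diff !ffunE subr0.
rewrite /sigma_pow sigma_pow_foldr ?enum_uniq // mem_enum /=.
elim: (enum 'I_k) => //.
Qed.

Definition ggen X k (sigma : 'I_k -> X -> X) (i : 'I_k) (x : X)
  : DRgroupoid sigma := exist _ (x, evec i, sigma i x) (inG_gen sigma i x).

Arguments ggen {X k} sigma i x.

From HB Require Import structures.
From mathcomp Require Import all_boot all_order all_algebra.
From mathcomp Require Import all_classical all_reals all_analysis.
From mathcomp Require Import zify.
Import Order.TTheory GRing.Theory Num.Theory.
Local Open Scope classical_set_scope.
Local Open Scope ring_scope.
Set Implicit Arguments. Unset Strict Implicit.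

(* A word s over the alphabet 'I_k acts on X by [walk sigma s] (first the
   letter s_1, then s_2, ...) and carries the path sum
     pathsum phi s x = phi_{s_1} x + phi_{s_2} (sigma_{s_1} x) + ... .
   The element (x, p - q, y) of G is described by the words [word p], [word q]
   listing each letter j exactly p_j (resp. q_j) times.
   1. (Words, PathSums) As the sigma_i commute, [walk sigma s] only depends on
      the letter counts of s.  Condition (1) on phi says exactly that the skew
      products (x, h) |-> (sigma_i x, h + phi_i x) on X * H commute, so
      [pathsum phi s] also only depends on the letter counts.
   2. (CocycleFormula) A cocycle c satisfies
      c (x, deg s, walk s x) = pathsum (c o gen) s x, hence
      c g = pathsum s (r g) - pathsum t (s g) whenever (s, t) describes g:
      c is determined by its values on the generators, and these satisfy (1).
   3. (Construction) Conversely, under (1) this formula, evaluated at any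
      describing words, is well defined by 1 and is a cocycle extending phi.
   4. (Continuity) As the sigma_i are continuous and open, the formula of 3 is
      continuous on basic open sets; and c o gen is continuous whenever c is.
   The proposition follows; for coboundaries, uniqueness (2) identifies c with
   the cocycle g |-> psi (r g) - psi (s g). *)

Definition commuting (X : Type) k (sigma : 'I_k -> X -> X) : Prop :=
  forall i j, sigma i \o sigma j = sigma j \o sigma i.

Definition compatible (X : Type) (H : zmodType) k (sigma : 'I_k -> X -> X)
  (phi : 'I_k -> X -> H) : Prop :=
  forall i j x, phi i x + phi j (sigma i x) = phi j x + phi i (sigma j x).

Section Words.
Variables (X : Type) (k : nat) (sigma : 'I_k -> X -> X).

Fixpoint walk (s : seq 'I_k) (x : X) : X :=
  if s is i :: t then walk t (sigma i x) else x.

Definition wdeg (s : seq 'I_k) : Zk k := [ffun j => (count_mem j s)%:Z].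

Definition word (p : 'I_k -> nat) : seq 'I_k :=
  foldr (fun j acc => acc ++ nseq (p j) j) [::] (enum 'I_k).

Lemma walk_cat s t x : walk (s ++ t) x = walk t (walk s x).
Proof. by elim: s x => //= i s IH x. Qed.

Lemma walk_word p x : walk (word p) x = sigma_pow sigma p x.
Proof.
have walk_nseq n j y : walk (nseq n j) y = iter n (sigma j) y.
  by elim: n y => //= n IH y; rewrite IH -iterSr.
rewrite /word /sigma_pow; elim: (enum 'I_k) x => //= j r IH x.
by rewrite walk_cat IH walk_nseq.
Qed.

Lemma sigma_pow_word p : sigma_pow sigma p = walk (word p).
Proof. by apply: funext => x; rewrite walk_word. Qed.

Lemma count_word p j : count_mem j (word p) = p j.
Proof.
suff count_r r : uniq r ->
    count_mem j (foldr (fun j acc => acc ++ nseq (p j) j) [::] r)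
    = if j \in r then p j else 0%N.
  by rewrite /word count_r ?enum_uniq ?mem_enum.
elim: r => //= i r IH /andP[ir ur].
rewrite count_cat IH // count_nseq in_cons.
case: (eqVneq j i) => [->|ji] /=; first by rewrite eqxx (negbTE ir) mul1n.
by rewrite eq_sym (negbTE ji) mul0n addn0.
Qed.

Lemma wdeg0 : wdeg [::] = 0.
Proof. by apply/ffunP => j; rewrite !ffunE. Qed.

Lemma wdeg_cons i s : wdeg (i :: s) = evec i + wdeg s.
Proof. by apply/ffunP => j; rewrite !ffunE /= PoszD eq_sym. Qed.

Lemma wdeg_cat s t : wdeg (s ++ t) = wdeg s + wdeg t.
Proof. by apply/ffunP => j; rewrite !ffunE /= count_cat PoszD. Qed.

Lemma nat_diff_word p q : nat_diff p q = wdeg (word p) - wdeg (word q).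
Proof. by apply/ffunP => j; rewrite !ffunE !count_word. Qed.

Lemma perm_count (s t : seq 'I_k) :
  (forall j, count_mem j s = count_mem j t) -> perm_eq s t.
Proof. by move=> E; apply/allP => j _ /=; apply/eqP; apply: E. Qed.

Lemma perm_wdeg_diff s t s' t' :
  wdeg s - wdeg t = wdeg s' - wdeg t' -> perm_eq (t ++ s') (t' ++ s).
Proof.
move=> /ffunP deg_eq; apply: perm_count => j; move: (deg_eq j).
rewrite !ffunE !count_cat => E; apply/eqP; rewrite -eqz_nat !PoszD; apply/eqP.
move: E; set a := Posz _; set b := Posz _; set c := Posz _; set d := Posz _; lia.
Qed.

Hypothesis sigma_comm : commuting sigma.

Lemma walk_comm i s x : sigma i (walk s x) = walk s (sigma i x).
Proof.
elim: s x => //= j s IH x.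
by rewrite IH; congr walk; move: (sigma_comm i j) => /(congr1 (fun f => f x)).
Qed.

Lemma walk_perm s t : perm_eq s t -> walk s =1 walk t.
Proof.
elim: s t => [|i s IH] t P x.
  by move: P; rewrite perm_sym => /perm_nilP ->.
have it : i \in t by rewrite -(perm_mem P) mem_head.
move: P; case/splitPr: it => t1 t2 P.
have P' : perm_eq s (t1 ++ t2).
  by rewrite -(perm_cons i) (permPl P) -cat1s perm_catCA.
by rewrite /= (IH _ P') !walk_cat /= walk_comm.
Qed.

Lemma sigma_pow_evec p q i z : nat_diff p q = evec i ->
  sigma_pow sigma p z = sigma_pow sigma q (sigma i z).
Proof.
move=> deg_pq; rewrite -!walk_word (@walk_perm _ (i :: word q)) //.
apply: perm_count => j; rewrite /= !count_word.
have := congr1 (fun f : Zk k => f j) deg_pq; rewrite !ffunE /= eq_sym.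
by case: (i == j) => /=; lia.
Qed.

Lemma inG_walk s x : inG sigma (x, wdeg s, walk s x).
Proof.
exists (fun j => count_mem j s), (fun _ => 0%N); split.
  by apply/ffunP => j; rewrite !ffunE subr0.
rewrite /= -!walk_word (@walk_perm (word (fun=> 0%N)) [::]) /=.
  by apply: walk_perm; apply: perm_count => j; rewrite count_word.
by apply: perm_count => j; rewrite count_word.
Qed.

End Words.

Section PathSums.
Variables (X : Type) (H : zmodType) (k : nat).
Variables (sigma : 'I_k -> X -> X) (phi : 'I_k -> X -> H).

Fixpoint pathsum (s : seq 'I_k) (x : X) : H :=
  if s is i :: t then phi i x + pathsum t (sigma i x) else 0.

Lemma pathsum_cat s t x :
  pathsum (s ++ t) x = pathsum s x + pathsum t (walk sigma s x).
Proof. by elim: s x => /= [|i s IH] x; rewrite ?add0r // IH addrA. Qed.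

Definition skew (i : 'I_k) (z : X * H) : X * H :=
  (sigma i z.1, z.2 + phi i z.1).

Lemma walk_skew s x h : walk skew s (x, h) = (walk sigma s x, h + pathsum s x).
Proof. by elim: s x h => /= [|i s IH] x h; rewrite ?addr0 // IH addrA. Qed.

Hypotheses (sigma_comm : commuting sigma) (phi_compat : compatible sigma phi).

Lemma skew_commuting : commuting skew.
Proof.
move=> i j; apply: funext => -[x h] /=; rewrite /skew /=.
have -> : sigma i (sigma j x) = sigma j (sigma i x).
  by move: (sigma_comm i j) => /(congr1 (fun f => f x)).
by rewrite -!addrA phi_compat.
Qed.

Lemma pathsum_perm s t : perm_eq s t -> pathsum s =1 pathsum t.
Proof.
move=> st x; have := congr1 snd (walk_perm skew_commuting st (x, 0)).
by rewrite !walk_skew /= !add0r.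
Qed.

End PathSums.

Section CocycleFormula.
Variables (X : Type) (k : nat) (sigma : 'I_k -> X -> X) (H : zmodType).

Definition gen_values (c : DRgroupoid sigma -> H) (i : 'I_k) (x : X) : H :=
  c (ggen sigma i x).

Lemma DR_congr T (f : DRgroupoid sigma -> T) g g' (h : inG sigma g)
  (h' : inG sigma g') : g = g' -> f (exist _ g h) = f (exist _ g' h').
Proof. by move=> E; subst g'; congr f; congr exist; apply: Prop_irrelevance. Qed.

Hypothesis sigma_comm : commuting sigma.
Variable c : DRgroupoid sigma -> H.
Hypothesis c_cocycle : is_cocycle c.

Lemma cocycle_walk s x (h : inG sigma (x, wdeg s, walk sigma s x)) :
  c (exist _ _ h) = pathsum sigma (gen_values c) s x.
Proof.
elim: s x h => [|i s IH] x h /=.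
  have h2 : inG sigma (x, wdeg [::] + wdeg [::], x).
    by rewrite wdeg0 addr0 -wdeg0.
  have := c_cocycle h h h2.
  by rewrite (DR_congr c h2 h) ?wdeg0 ?addr0 // -[LHS]addr0 => /addrI <-.
have h2 : inG sigma (x, evec i + wdeg s, walk sigma s (sigma i x)).
  by rewrite -wdeg_cons; apply: inG_walk.
rewrite (DR_congr c h h2) ?wdeg_cons //.
by rewrite (c_cocycle (inG_gen sigma i x) (inG_walk sigma_comm s _)) IH.
Qed.

Lemma cocycle_formula g s t :
  gdeg g = wdeg s - wdeg t -> walk sigma s (grng g) = walk sigma t (gsrc g) ->
  c g = pathsum sigma (gen_values c) s (grng g)
        - pathsum sigma (gen_values c) t (gsrc g).
Proof.
case: g => [[[x m] y] h]; rewrite /grng /gsrc /gdeg /= => deg_m st; subst m.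
have h2 : inG sigma (x, wdeg s - wdeg t + wdeg t, walk sigma t y).
  by rewrite subrK -st; apply: inG_walk.
have := c_cocycle h (inG_walk sigma_comm t y) h2.
rewrite (DR_congr c h2 (inG_walk sigma_comm s x)) ?subrK ?st //.
by rewrite !cocycle_walk => ->; rewrite addrK.
Qed.

Lemma gen_values_compatible : compatible sigma (gen_values c).
Proof.
move=> i j x; have := cocycle_walk (inG_walk sigma_comm [:: i; j] x).
rewrite (DR_congr c _ (inG_walk sigma_comm [:: j; i] x)).
  by rewrite cocycle_walk //= !addr0.
congr (_, _, _); first by apply/ffunP => l; rewrite !ffunE /= addnCA.
by move: (sigma_comm j i) => /(congr1 (fun f => f x)).
Qed.

End CocycleFormula.

Lemma cocycle_unique X k (sigma : 'I_k -> X -> X) (H : zmodType)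
  (c1 c2 : DRgroupoid sigma -> H) : commuting sigma ->
  is_cocycle c1 -> is_cocycle c2 ->
  (forall i x, c1 (ggen sigma i x) = c2 (ggen sigma i x)) -> c1 = c2.
Proof.
move=> sigma_comm c1_cocycle c2_cocycle E; apply: funext => g.
have [p [q [deg_g walk_g]]] := proj2_sig g.
rewrite nat_diff_word in deg_g; rewrite -!walk_word in walk_g.
rewrite !(cocycle_formula sigma_comm _ deg_g walk_g) //.
suff -> : gen_values c1 = gen_values c2 by [].
by apply/funext => i; apply/funext => x; apply: E.
Qed.

Lemma coboundary_cocycle X k (sigma : 'I_k -> X -> X) (H : zmodType)
  (f : X -> H) :
  is_cocycle (fun g : DRgroupoid sigma => f (grng g) - f (gsrc g)).
Proof. by move=> x y z m n h1 h2 h3; rewrite /grng /gsrc /= addrA subrK. Qed.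

Section Construction.
Variables (X : Type) (H : zmodType) (k : nat).
Variables (sigma : 'I_k -> X -> X) (phi : 'I_k -> X -> H).
Hypotheses (sigma_comm : commuting sigma) (phi_compat : compatible sigma phi).

Local Notation P := (pathsum sigma phi).

Lemma pathsum_diff_wd s t s' t' x y :
  walk sigma s x = walk sigma t y -> walk sigma s' x = walk sigma t' y ->
  wdeg s - wdeg t = wdeg s' - wdeg t' ->
  P s x - P t y = P s' x - P t' y.
Proof.
move=> st s't' deg_eq.
have extend a b a' : walk sigma a x = walk sigma b y ->
    P a x - P b y = P (a ++ a') x - P (b ++ a') y.
  by move=> ab; rewrite !pathsum_cat ab opprD addrACA subrr addr0.
rewrite (extend _ _ s' st) (extend _ _ s s't').
rewrite (pathsum_perm sigma_comm phi_compat (permEl (perm_catC s s'))).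
by congr (_ - _); apply: pathsum_perm => //; apply: perm_wdeg_diff.
Qed.

Lemma describe_ex (g : DRgroupoid sigma) :
  exists pq : ('I_k -> nat) * ('I_k -> nat), gdeg g = nat_diff pq.1 pq.2 /\
    sigma_pow sigma pq.1 (grng g) = sigma_pow sigma pq.2 (gsrc g).
Proof. by case: g => [[[x m] y] [p [q E]]]; exists (p, q). Qed.

Definition cocycle_of (g : DRgroupoid sigma) : H :=
  let pq := proj1_sig (cid (describe_ex g)) in
  P (word pq.1) (grng g) - P (word pq.2) (gsrc g).

Lemma cocycle_of_eq g s t :
  gdeg g = wdeg s - wdeg t -> walk sigma s (grng g) = walk sigma t (gsrc g) ->
  cocycle_of g = P s (grng g) - P t (gsrc g).
Proof.
rewrite /cocycle_of; case: (cid _) => -[p q] /= [deg_pq walk_pq] deg_st walk_st.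
by apply: pathsum_diff_wd; rewrite ?walk_word // -nat_diff_word -deg_pq.
Qed.

(* describing words of the two factors combine into describing words of the
   product; condition (1) reconciles the two path sums *)
Lemma cocycle_of_cocycle : is_cocycle cocycle_of.
Proof.
move=> x y z m n h1 h2 h3.
have [p1 [q1 [deg1 walk1]]] := h1; have [p2 [q2 [deg2 walk2]]] := h2.
rewrite /= -!walk_word nat_diff_word in deg1 walk1.
rewrite /= -!walk_word nat_diff_word in deg2 walk2.
set s1 := word p1 in deg1 walk1; set t1 := word q1 in deg1 walk1.
set s2 := word p2 in deg2 walk2; set t2 := word q2 in deg2 walk2.
rewrite (cocycle_of_eq (g := exist _ _ h1) deg1 walk1).
rewrite (cocycle_of_eq (g := exist _ _ h2) deg2 walk2).
have deg3 : gdeg (exist _ _ h3) = wdeg (s1 ++ s2) - wdeg (t2 ++ t1).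
  by rewrite /gdeg /= deg1 deg2 !wdeg_cat opprD addrACA (addrC (- wdeg t1)).
have walk3 : walk sigma (s1 ++ s2) x = walk sigma (t2 ++ t1) z.
  rewrite !walk_cat walk1 -walk2 -!walk_cat.
  exact: (walk_perm sigma_comm (permEl (perm_catC _ _))).
rewrite (cocycle_of_eq deg3 walk3).
rewrite /grng /gsrc /= !pathsum_cat walk1 -walk2.
have swap : P s2 (walk sigma t1 y) - P t1 (walk sigma s2 y) = P s2 y - P t1 y.
  have := pathsum_perm sigma_comm phi_compat (permEl (perm_catC t1 s2)) y.
  rewrite !pathsum_cat => E.
  by apply/eqP; rewrite subr_eq addrAC -E addrC addKr.
by rewrite opprD addrACA swap [LHS]addrACA [RHS]addrACA [- P t2 z + _]addrC.
Qed.

(* the generator (x, e_i, sigma_i x) is described by the words [:: i], [::] *)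
Lemma cocycle_of_gen i x : cocycle_of (ggen sigma i x) = phi i x.
Proof.
rewrite (@cocycle_of_eq _ [:: i] [::]) /= ?addr0 ?subr0 //.
by rewrite wdeg_cons wdeg0 addr0.
Qed.

End Construction.

Arguments cocycle_of {X H k} sigma phi g.

Lemma continuous_add (T : topologicalType) (H : topologicalZmodType)
  (f g : T -> H) :
  continuous f -> continuous g -> continuous (fun x => f x + g x).
Proof.
move=> cf cg x; apply: (@continuous_comp _ _ _ (fun x => (f x, g x))
  (fun z : H * H => z.1 + z.2)); last exact: add_continuous.
by apply: cvg_pair; [exact: cf | exact: cg].
Qed.

Lemma continuous_sub (T : topologicalType) (H : topologicalZmodType)
  (f g : T -> H) :
  continuous f -> continuous g -> continuous (fun x => f x - g x).
Proof.
move=> cf cg x; apply: (@continuous_comp _ _ _ (fun x => (f x, g x))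
  (fun z : H * H => z.1 - z.2)); last exact: sub_continuous.
by apply: cvg_pair; [exact: cf | exact: cg].
Qed.

Lemma local_homeo_open (X : topologicalType) (f : X -> X) :
  local_homeo f -> forall W, open W -> open (f @` W).
Proof.
move=> [_ f_loc] W oW; rewrite openE => _ [w Ww <-].
have [U [oU Uw _ f_openU]] := f_loc w.
have oWU : open (f @` (W `&` U)).
  by apply: f_openU; [exact: openI | move=> a []].
apply: (@filterS _ _ _ (f @` (W `&` U))).
  by move=> _ [a [Wa _] <-]; exists a.
by apply: open_nbhs_nbhs; split => //; exists w.
Qed.

Section Continuity.
Variables (X : topologicalType) (H : topologicalZmodType) (k : nat).
Variables (sigma : 'I_k -> X -> X).
Hypothesis sigma_cont : forall i, continuous (sigma i).

Lemma walk_continuous s : continuous (walk sigma s).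
Proof.
elim: s => [|i s IH] /= x; first exact: cvg_id.
apply: (@continuous_comp _ _ _ (sigma i) (walk sigma s)).
  exact: sigma_cont.
exact: IH.
Qed.

Lemma pathsum_continuous (phi : 'I_k -> X -> H) :
  (forall i, continuous (phi i)) -> forall s, continuous (pathsum sigma phi s).
Proof.
move=> phi_cont; elim=> [|i s IH] /=; first by move=> x; exact: cvg_cst.
apply: continuous_add => // x.
apply: (@continuous_comp _ _ _ (sigma i) (pathsum sigma phi s)).
  exact: sigma_cont.
exact: IH.
Qed.

Lemma sigma_pow_continuous p : continuous (sigma_pow sigma p).
Proof. by rewrite sigma_pow_word; exact: walk_continuous. Qed.

Hypothesis sigma_open : forall i W, open W -> open (sigma i @` W).

Lemma sigma_pow_open p W : open W -> open (sigma_pow sigma p @` W).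
Proof.
rewrite sigma_pow_word; elim: (word p) W => [|i s IH] W oW /=.
  by rewrite image_id.
by rewrite -(image_comp (sigma i) (walk sigma s)); apply/IH/sigma_open.
Qed.

End Continuity.

Section ContinuousCocycles.
Variables (X : topologicalType) (H : topologicalZmodType) (k : nat).
Variables (sigma : 'I_k -> X -> X).
Hypothesis sigma_comm : commuting sigma.
Hypothesis sigma_cont : forall i, continuous (sigma i).
Hypothesis sigma_open : forall i W, open W -> open (sigma i @` W).

Lemma basic_open_around p q (U0 V0 : set X) (g : DRgroupoid sigma) :
  open U0 -> open V0 -> Zbasic sigma U0 V0 p q g ->
  exists U V, [/\ open U, open V,
    sigma_pow sigma p @` U = sigma_pow sigma q @` V,
    Zbasic sigma U V p q g & Zbasic sigma U V p q `<=` Zbasic sigma U0 V0 p q].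
Proof.
move=> oU0 oV0 [U0g [V0g [deg_g PQg]]].
set P := sigma_pow sigma p in PQg *; set Q := sigma_pow sigma q in PQg *.
have restrict (F : X -> X) (A S : set X) :
    F @` (A `&` F @^-1` (F @` A `&` S)) = F @` A `&` S.
  apply/seteqP; split; first by move=> _ [a [_ FaS] <-].
  by move=> _ [[a Aa <-] Sa]; exists a => //; split => //; split => //; exists a.
have open_pre (F : X -> X) (A S : set X) : continuous F -> open A -> open S ->
    open (A `&` F @^-1` S).
  by move=> cF oA oS; apply: openI => //; exact: open_comp.
have oPQ : open (P @` U0 `&` Q @` V0) by apply: openI; exact: sigma_pow_open.
exists (U0 `&` P @^-1` (P @` U0 `&` Q @` V0)).
exists (V0 `&` Q @^-1` (Q @` V0 `&` P @` U0)); split.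
- by apply: open_pre => //; exact: sigma_pow_continuous.
- by apply: open_pre; rewrite 1?setIC //; exact: sigma_pow_continuous.
- by rewrite !restrict setIC.
- split; first by split => //; split; [exists (grng g) | exists (gsrc g)].
  split; first by split => //; split; [exists (gsrc g) | exists (grng g)].
  by [].
- by move=> g' [[U0g' _] [[V0g' _] deg_PQ]].
Qed.

(* the cocycle built from a continuous compatible phi is continuous: near g it
   is given by the continuous formula of [cocycle_of_eq] *)
Lemma cocycle_of_continuous (phi : 'I_k -> X -> H) :
  compatible sigma phi -> (forall i, continuous (phi i)) ->
  groupoid_continuous (cocycle_of sigma phi).
Proof.
move=> phi_compat phi_cont g W cW.
have [p [q [deg_g PQg]]] := proj2_sig g.
set F := pathsum sigma phi (word p); set G := pathsum sigma phi (word q).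
have formula (g' : DRgroupoid sigma) : gdeg g' = nat_diff p q ->
    sigma_pow sigma p (grng g') = sigma_pow sigma q (gsrc g') ->
    cocycle_of sigma phi g' = F (grng g') - G (gsrc g').
  move=> deg' PQ'; apply: cocycle_of_eq => //; first by rewrite -nat_diff_word.
  by rewrite !walk_word.
have FG_cont : continuous (fun z : X * X => F z.1 - G z.2).
  apply: continuous_sub => z.
    apply: (@continuous_comp _ _ _ fst F); first exact: cvg_fst.
    exact: pathsum_continuous.
  apply: (@continuous_comp _ _ _ snd G); first exact: cvg_snd.
  exact: pathsum_continuous.
have cW' : nbhs (F (grng g) - G (gsrc g)) W by rewrite -formula.
have [[A B] /= [nA nB] AB] := FG_cont (grng g, gsrc g) W cW'.
move: nA nB; rewrite !nbhsE => -[U0 [oU0 U0g] sU0] [V0 [oV0 V0g] sV0].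
have Zg : Zbasic sigma U0 V0 p q g by [].
have [U [V [oU oV PUQV Zg_UV sub]]] := basic_open_around oU0 oV0 Zg.
exists U, V, p, q; split => // g' /sub [U0g' [V0g' [deg' PQ']]].
rewrite /preimage /= formula //; apply: (AB (_, _)).
by split; [exact: sU0 | exact: sV0].
Qed.

Lemma gen_values_continuous (c : DRgroupoid sigma -> H) :
  groupoid_continuous c -> forall i, continuous (gen_values c i).
Proof.
move=> c_cont i x W cW.
have [U [V [p [q [oU oV _ [Ux [Vx [deg_pq PQ]]] sub]]]]] := c_cont _ W cW.
apply: (@filterS _ _ _ (U `&` sigma i @^-1` V)).
  move=> x' [Ux' Vx']; apply: (sub (ggen sigma i x')); do 3!split => //.
  by rewrite /grng /gsrc /=; apply: sigma_pow_evec.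
apply: open_nbhs_nbhs; split; last by split.
by apply: openI => //; move/continuousP: (@sigma_cont i); apply.
Qed.

End ContinuousCocycles.

Theorem proposition3p8
  (H : topologicalZmodType) (R : realType) (X : pseudoMetricType R) (k : nat)
  (sigma : 'I_k -> X -> X) (phi : 'I_k -> X -> H) :
  (* H is a locally compact (Hausdorff) abelian group *)
  hausdorff_space H -> locally_compact [set: H] ->
  (* X is a compact metric space *)
  hausdorff_space X -> compact [set: X] ->
  (* sigma: pairwise commuting surjective local homeomorphisms *)
  (forall i j, sigma i \o sigma j = sigma j \o sigma i) ->
  (forall i (y : X), exists x, sigma i x = y) ->
  (forall i, local_homeo (sigma i)) ->
  (* phi is a k-tuple in C(X, H) *)
  (forall i, continuous (phi i)) ->
  [/\
    (* (1) <-> (2) *)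
    (forall i j x, phi i x + phi j (sigma i x) = phi j x + phi i (sigma j x))
      <-> (exists! c : DRgroupoid sigma -> H,
             is_cont_cocycle c /\ forall i x, c (ggen sigma i x) = phi i x),
    (* every continuous cocycle arises from some phi satisfying (1) *)
    (forall c : DRgroupoid sigma -> H, is_cont_cocycle c ->
       exists phi' : 'I_k -> X -> H,
         [/\ forall i, continuous (phi' i),
             forall i j x,
               phi' i x + phi' j (sigma i x) = phi' j x + phi' i (sigma j x) &
             forall i x, c (ggen sigma i x) = phi' i x]) &
    (* coboundary characterisation *)
    (forall c : DRgroupoid sigma -> H, is_cont_cocycle c ->
       is_coboundary c <->
       exists psi : X -> H, continuous psi /\
         forall i x, c (ggen sigma i x) = psi x - psi (sigma i x))].
Proof.
move=> _ _ _ _ sigma_comm _ sigma_lh phi_cont.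
have sigma_cont i : continuous (sigma i) by case: (sigma_lh i).
have sigma_open i : forall W, open W -> open (sigma i @` W).
  exact: local_homeo_open.
split.
- split => [phi_compat | [c [[[c_cocycle _] c_gen] _]]].
  + exists (cocycle_of sigma phi); split.
      split; last exact: cocycle_of_gen.
      split; first exact: cocycle_of_cocycle.
      exact: cocycle_of_continuous.
    move=> c [[c_cocycle _] c_gen]; apply: cocycle_unique => //.
      exact: cocycle_of_cocycle.
    by move=> i x; rewrite c_gen cocycle_of_gen.
  + by move=> i j x; have := gen_values_compatible sigma_comm c_cocycle i j x;
      rewrite /gen_values !c_gen.
- move=> c [c_cocycle c_cont]; exists (gen_values c); split => //.
    exact: gen_values_continuous.
  exact: gen_values_compatible.
- move=> c [c_cocycle _]; split => [[f [f_cont c_eq]] | [psi [psi_cont c_gen]]].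
    by exists f; split => // i x; rewrite c_eq.
  exists psi; split => //.
  have -> // : c = fun g => psi (grng g) - psi (gsrc g).
  by apply: cocycle_unique => //; exact: coboundary_cocycle.
Qed.
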